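(* Let $A \in \mathbb{R}^{m \times r}$, $B \in \mathbb{R}^{r \times n}$, and for $\kappa\in\mathbb{R}^r_+$ let $f_\kappa\colon\mathbb{R}^n_+\to\mathbb{R}^m$, $f_\kappa(x)=A_\kappa x^B$. Assume $\mathrm{rank}(A)=s$, and let $S \subseteq \mathbb{R}^n$ be a vector subspace with $\dim(S) = s$. Let $Z\in \mathbb{R}^{(n-s)\times n}$ and $C\in \mathbb{R}^{n \times s}$ satisfy $\mathrm{im}(C)=S=\ker(Z)$. Let $A'\in \mathbb{R}^{s \times r}$ with $\ker(A)=\ker(A')$, set $\widetilde{A} = C A' \in \mathbb{R}^{n \times r}$, and for $\kappa \in \mathbb{R}^r_+$, $\lambda \in \mathbb{R}^n_+$ let $\Gamma_{\kappa,\lambda}\in\mathbb{R}^{n\times n}$ be the block matrix with top block $Z$ and bottom block $A'_\kappa B_\lambda$. The following are equivalent: (inj) $f_\kappa$ is injective with respect to $S$, for all $\kappa \in \mathbb{R}^r_+$; (det) viewed as a polynomial in the variables $\kappa_1,\dots,\kappa_r,\lambda_1,\dots,\lambda_n$, $\det(\Gamma_{\kappa,\lambda})$ is nonzero and all of its nonzero coefficients have the same sign; (min) for all $I\subseteq [n]$, $J\subseteq [r]$ of cardinality $s$, the product $\det(\widetilde{A}_{I,J}) \det(B_{J,I})$ either is zero or has the same sign as all other nonzero such products, and at least one such product is nonzero.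
   Context: $\mathbb{R}_+$ denotes the strictly positive reals. $(x^B)_j=\prod_i x_i^{b_{ji}}$ (real exponents), $A_\kappa=A\,\mathrm{diag}(\kappa)$, $A'_\kappa=A'\,\mathrm{diag}(\kappa)$, $B_\lambda=B\,\mathrm{diag}(\lambda)$, $[n]=\{1,\dots,n\}$, and $M_{K,L}$ is the submatrix of $M$ with rows in $K$ and columns in $L$. A function $g$ on $\mathbb{R}^n_+$ is injective with respect to $S$ if $x,y\in\mathbb{R}^n_+$, $x\ne y$, $x-y\in S$ imply $g(x)\neq g(y)$. Convention: if $s=n$, then $\Gamma_{\kappa,\lambda}=A'_\kappa B_\lambda$ (and $Z$ is empty); determinants of $0\times 0$ matrices equal $1$. *)

From Stdlib Require Import Reals ClassicalEpsilon FunctionalExtensionality.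
From HB Require Import structures.
From mathcomp Require Import all_boot all_order all_algebra.
Set Implicit Arguments. Unset Strict Implicit. Unset Printing Implicit Defensive.
Import GRing.Theory.

Definition Req_bool (x y : R) : bool := if Req_EM_T x y then true else false.
Lemma Req_boolP : Equality.axiom Req_bool.
Proof. by move=> x y; rewrite /Req_bool; case: Req_EM_T => h; constructor. Qed.
HB.instance Definition _ := hasDecEq.Build R Req_boolP.

Definition Rfind (P : pred R) (n : nat) : option R :=
  match excluded_middle_informative (exists x, P x) with
  | left h => Some (proj1_sig (constructive_indefinite_description _ h))
  | right _ => None
  end.
Lemma Rfind_correct P n x : Rfind P n = Some x -> P x.
Proof.
rewrite /Rfind; case: excluded_middle_informative => // h [<-].
exact: proj2_sig (constructive_indefinite_description _ h).
Qed.
Lemma Rfind_complete (P : pred R) : (exists x, P x) -> exists n, Rfind P n.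
Proof. by move=> h; exists 0%N; rewrite /Rfind; case: excluded_middle_informative. Qed.
Lemma Rfind_ext (P Q : pred R) : P =1 Q -> Rfind P =1 Rfind Q.
Proof. by move=> h; have -> : P = Q by apply: functional_extensionality. Qed.
HB.instance Definition _ := hasChoice.Build R Rfind_correct Rfind_complete Rfind_ext.

Lemma R_addrA : associative Rplus. Proof. by move=> x y z; rewrite Rplus_assoc. Qed.
Lemma R_addrC : commutative Rplus. Proof. exact: Rplus_comm. Qed.
Lemma R_add0r : left_id R0 Rplus. Proof. exact: Rplus_0_l. Qed.
Lemma R_addNr : left_inverse R0 Ropp Rplus. Proof. exact: Rplus_opp_l. Qed.
HB.instance Definition _ := GRing.isZmodule.Build R R_addrA R_addrC R_add0r R_addNr.

Lemma R_mulrA : associative Rmult. Proof. by move=> x y z; rewrite Rmult_assoc. Qed.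
Lemma R_mulrC : commutative Rmult. Proof. exact: Rmult_comm. Qed.
Lemma R_mul1r : left_id R1 Rmult. Proof. exact: Rmult_1_l. Qed.
Lemma R_mulrDl : left_distributive Rmult Rplus. Proof. exact: Rmult_plus_distr_r. Qed.
Lemma R_oner_neq0 : R1 != R0. Proof. by apply/eqP; exact: R1_neq_R0. Qed.
HB.instance Definition _ :=
  GRing.Zmodule_isComNzRing.Build R R_mulrA R_mulrC R_mul1r R_mulrDl R_oner_neq0.

Definition Rinv' (x : R) : R := if Req_EM_T x R0 then R0 else Rinv x.
Lemma R_mulVf (x : R) : x != R0 -> Rmult (Rinv' x) x = R1.
Proof.
move/eqP=> hx; rewrite /Rinv'; case: Req_EM_T => [h|h]; first by case: hx.
exact: Rinv_l.
Qed.
Lemma R_invr0 : Rinv' R0 = R0.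
Proof. by rewrite /Rinv'; case: Req_EM_T. Qed.
HB.instance Definition _ := GRing.ComNzRing_isField.Build R R_mulVf R_invr0.

Local Open Scope ring_scope.

Definition posv (n : nat) (x : 'cV[R]_n) : Prop := forall i, Rlt 0 (x i 0).

Definition monB (r n : nat) (B : 'M[R]_(r, n)) (x : 'cV[R]_n) : 'cV[R]_r :=
  \col_(j < r) \prod_(i < n) Rpower (x i 0) (B j i).

(* M_kappa = M diag(kappa) *)
Definition diagw (n : nat) (k : 'cV[R]_n) : 'M[R]_n := diag_mx k^T.

Definition fk (m r n : nat) (A : 'M[R]_(m, r)) (B : 'M[R]_(r, n))
  (kappa : 'cV[R]_r) (x : 'cV[R]_n) : 'cV[R]_m :=
  (A *m diagw kappa) *m monB B x.

Definition inj_wrt (m n : nat) (g : 'cV[R]_n -> 'cV[R]_m) (S : 'cV[R]_n -> Prop) :=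
  forall x y, posv x -> posv y -> x <> y -> S (x - y) -> g x <> g y.

Definition im_mx (n s : nat) (C : 'M[R]_(n, s)) (x : 'cV[R]_n) : Prop :=
  exists v : 'cV[R]_s, x = C *m v.
Definition ker_mx (p n : nat) (Z : 'M[R]_(p, n)) (x : 'cV[R]_n) : Prop :=
  Z *m x = 0.

(* Gamma_{kappa,lambda} = [ Z ; A'_kappa B_lambda ], an n x n matrix
   (when s = n, Z has no rows and Gamma = A'_kappa B_lambda) *)
Definition Gamma (n s r : nat) (hsn : (s <= n)%N) (Z : 'M[R]_(n - s, n))
  (A' : 'M[R]_(s, r)) (B : 'M[R]_(r, n)) (kappa : 'cV[R]_r) (lambda : 'cV[R]_n)
  : 'M[R]_n :=
  castmx (subnK hsn, erefl n)
    (col_mx Z ((A' *m diagw kappa) *m (B *m diagw lambda))).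

(* Polynomials in the variables kappa_1..kappa_r, lambda_1..lambda_n, with
   all exponents bounded by d: a coefficient for every exponent vector. *)
Definition expv (r n d : nat) := ({ffun 'I_r -> 'I_d.+1} * {ffun 'I_n -> 'I_d.+1})%type.

Definition peval (r n d : nat) (c : expv r n d -> R)
  (kappa : 'cV[R]_r) (lambda : 'cV[R]_n) : R :=
  \sum_(e : expv r n d)
     c e * (\prod_(k < r) kappa k 0 ^+ e.1 k) * (\prod_(j < n) lambda j 0 ^+ e.2 j).

(* strictly increasing index maps: these enumerate the s-subsets of [n] *)
Definition incr (s n : nat) (f : 'I_s -> 'I_n) : Prop :=
  forall i j : 'I_s, (i < j)%N -> (f i < f j)%N.

From Stdlib Require Import Reals Lra.
From HB Require Import structures.
From mathcomp Require Import all_boot all_order all_fingroup all_algebra.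
From mathcomp Require Import ring lra zify.
Set Implicit Arguments. Unset Strict Implicit. Unset Printing Implicit Defensive.
Import Order.TTheory GRing.Theory Num.Theory.

(* Write M_{kappa,lambda} = A'_kappa B_lambda. The proof is organized around
   the "Jacobian determinant" jac_det kappa lambda = det(M_{kappa,lambda} C):
   - Linear algebra: by Cauchy-Binet (proved below for matrices over any
     commutative ring) jac_det is the multilinear polynomial
       sum_{I,J} det(Ã_{I,J}) det(B_{J,I}) kappa^J lambda^I,
     and det Gamma_{kappa,lambda} = c0 * jac_det for a constant c0 <> 0,
     since [Z; M] [D C] = [1 0; M D, M C] for a right inverse D of Z.
   - Analysis: the secant x^B - y^B of the monomial map equals
     diag(mu) B diag(lambda) (x - y) with mu, lambda positive, and every
     direction arises in this way. Hence (inj) holds iff jac_det does not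
     vanish on the positive orthant ("nonvanishing").
   - Signs: (det) -> nonvanishing, since a one-signed nonzero polynomial is
     nonzero at positive points; (min) -> (det) by reading off coefficients;
     nonvanishing -> (min) since jac_det has constant sign on the connected
     orthant (intermediate value theorem), while near the point 1_J + e 1_{not J},
     1_I + e 1_{not I} its sign is that of the (I, J) coefficient. *)

Definition Rle_bool (x y : R) : bool := if Rle_dec x y then true else false.

Lemma Rle_boolP (x y : R) : reflect (Rle x y) (Rle_bool x y).
Proof. by rewrite /Rle_bool; case: Rle_dec => h; constructor. Qed.

Section RealOrder.
Local Open Scope R_scope.
Implicit Types x y : R.

Lemma Rle_bool_add x y : Rle_bool 0 x -> Rle_bool 0 y -> Rle_bool 0 (x + y).
Proof. by move=> /Rle_boolP hx /Rle_boolP hy; apply/Rle_boolP; Lra.lra. Qed.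

Lemma Rle_bool_mul x y : Rle_bool 0 x -> Rle_bool 0 y -> Rle_bool 0 (x * y).
Proof. by move=> /Rle_boolP hx /Rle_boolP hy; apply/Rle_boolP/Rmult_le_pos. Qed.

Lemma Rle_bool_anti x : Rle_bool 0 x -> Rle_bool x 0 -> x = 0.
Proof. by move=> /Rle_boolP hx /Rle_boolP hy; Lra.lra. Qed.

Lemma Rle_bool_sub x y : Rle_bool 0 (y + - x) = Rle_bool x y.
Proof. by apply/Rle_boolP/Rle_boolP; Lra.lra. Qed.

Lemma Rle_bool_total x : Rle_bool 0 x || Rle_bool x 0.
Proof. by case: (Rle_dec 0 x) => h; apply/orP; [left|right]; apply/Rle_boolP; Lra.lra. Qed.

Lemma Rabs_pos_bool x : Rle_bool 0 x -> Rabs x = x.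
Proof. by move/Rle_boolP; apply: Rabs_pos_eq. Qed.

End RealOrder.

HB.instance Definition _ := Num.IntegralDomain_isLeReal.Build R
  Rle_bool_add Rle_bool_mul Rle_bool_anti Rle_bool_sub Rle_bool_total
  Rabs_Ropp Rabs_pos_bool (fun x y => erefl ((y != x) && Rle_bool x y)).

Local Open Scope ring_scope.

Lemma RleP (x y : R) : reflect (Rle x y) (x <= y).
Proof. exact: Rle_boolP. Qed.

Lemma RltP (x y : R) : reflect (Rlt x y) (x < y).
Proof.
apply: (iffP andP) => [[/eqP neq /RleP le]|lt]; first by Lra.lra.
by split; [apply/eqP; Lra.lra | apply/RleP; Lra.lra].
Qed.

Section IncreasingMaps.
Variables s p : nat.
Implicit Types (f g : {ffun 'I_s -> 'I_p}).

Definition incrb f : bool :=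
  [forall i : 'I_s, forall j : 'I_s, (i < j)%N ==> (f i < f j)%N].

Lemma incrbP f : reflect (incr f) (incrb f).
Proof.
apply: (iffP forallP) => [h i j lij|h i]; first exact: (implyP (forallP (h i) j) lij).
by apply/forallP => j; apply/implyP; apply: h.
Qed.

Lemma incr_ffun (f : 'I_s -> 'I_p) : incr f -> incrb [ffun i => f i].
Proof. by move=> f_incr; apply/incrbP => i j lij; rewrite !ffunE; apply: f_incr. Qed.

Lemma incr_inj f : incrb f -> injective f.
Proof.
move=> /incrbP f_incr i j fij; apply/val_inj/eqP.
by case: ltngtP => // /f_incr; rewrite fij ltnn.
Qed.

Local Notation ltI := (relpre (@nat_of_ord p) ltn).

Lemma ltI_trans : transitive ltI. Proof. by move=> ? ? ?; apply: ltn_trans. Qed.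

Lemma enum_ord_sorted (q : nat) : sorted (relpre (@nat_of_ord q) ltn) (enum 'I_q).
Proof. by rewrite -sorted_map val_enum_ord iota_ltn_sorted. Qed.

Definition sorted_image g : seq 'I_p := [seq x <- enum 'I_p | x \in codom g].

Lemma sorted_image_sorted g : sorted ltI (sorted_image g).
Proof. exact: sorted_filter ltI_trans _ _ (enum_ord_sorted p). Qed.

Lemma mem_sorted_image g x : (x \in sorted_image g) = (x \in codom g).
Proof. by rewrite mem_filter mem_enum andbT. Qed.

Lemma size_sorted_image g : injective g -> size (sorted_image g) = s.
Proof.
move=> g_inj; rewrite -(card_uniqP (filter_uniq _ (enum_uniq _))).
by rewrite (eq_card (mem_sorted_image g)) card_codom // card_ord.
Qed.

Lemma sorted_image_incr f : incrb f -> sorted_image f = codom f.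
Proof.
move=> /incrbP f_incr; apply: (irr_sorted_eq ltI_trans) => //.
- by move=> x; rewrite /= ltnn.
- exact: sorted_image_sorted.
- rewrite codomE; have := enum_ord_sorted s.
  by apply: homo_sorted => i j; apply: f_incr.
- exact: mem_sorted_image.
Qed.

Definition sort_map g : {ffun 'I_s -> 'I_p} :=
  [ffun i => nth (g i) (sorted_image g) i].

Lemma sort_map_incr g : injective g -> incrb (sort_map g).
Proof.
move=> g_inj; apply/incrbP => i j lij; rewrite !ffunE.
rewrite (set_nth_default (g i) (g j)) ?size_sorted_image //.
by apply: (sorted_ltn_nth ltI_trans) => //; rewrite ?sorted_image_sorted
  ?inE ?size_sorted_image.
Qed.

Lemma sort_map_eq g g' : injective g -> codom g =i codom g' ->
  sort_map g = sort_map g'.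
Proof.
move=> g_inj eq_im; have eq_si : sorted_image g = sorted_image g'.
  by apply: eq_filter => x; rewrite eq_im.
apply/ffunP => i; rewrite !ffunE eq_si; apply: set_nth_default.
by rewrite -eq_si size_sorted_image.
Qed.

Lemma sort_map_id f : incrb f -> sort_map f = f.
Proof.
move=> f_incr; apply/ffunP => i; rewrite ffunE sorted_image_incr // codomE.
by rewrite (nth_map i) ?size_enum_ord // nth_ord_enum.
Qed.

Lemma incr_eq_image f f' : incrb f -> incrb f' -> {subset codom f <= codom f'} ->
  f = f'.
Proof.
move=> f_incr f'_incr sub; have eq_im : codom f =i codom f'.
  apply/subset_cardP; last exact/subsetP.
  by rewrite !card_codom ?card_ord //; apply: incr_inj.
by rewrite -(sort_map_id f_incr) -(sort_map_id f'_incr);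
  apply: sort_map_eq => //; apply: incr_inj.
Qed.

(* The permutation sorting an injective map: g = sort_map g \o sorting_perm g. *)
Definition rank_fun g : {ffun 'I_s -> 'I_s} :=
  [ffun i => insubd i (index (g i) (sorted_image g))].

Definition sorting_perm g : 'S_s := insubd (1%g : {perm 'I_s}) (rank_fun g).

Lemma rank_funE g i : injective g -> rank_fun g i = index (g i) (sorted_image g) :> nat.
Proof.
move=> g_inj; rewrite ffunE insubdK //.
have lt_index : (index (g i) (sorted_image g) < size (sorted_image g))%N.
  by rewrite index_mem mem_sorted_image codom_f.
by rewrite size_sorted_image in lt_index.
Qed.

Lemma sorting_permE g i : injective g ->
  sorting_perm g i = index (g i) (sorted_image g) :> nat.
Proof.
move=> g_inj; have rank_inj : injectiveb (rank_fun g).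
  apply/injectiveP => i1 i2 eq_rank; have := congr1 (@nat_of_ord s) eq_rank.
  rewrite !rank_funE // => /(congr1 (nth (g i1) (sorted_image g))).
  by rewrite !nth_index ?mem_sorted_image ?codom_f //; apply: g_inj.
by rewrite -rank_funE // -[in LHS]pvalE insubdK.
Qed.

Lemma sort_map_sorting_perm g i : injective g -> sort_map g (sorting_perm g i) = g i.
Proof.
move=> g_inj; rewrite ffunE (set_nth_default (g i)) ?size_sorted_image //.
by rewrite sorting_permE // nth_index // mem_sorted_image codom_f.
Qed.

(* Every injective map factors uniquely as an increasing map after a permutation. *)
Lemma big_injective_maps (T : Type) (idx : T) (op : Monoid.com_law idx)
    (F : {ffun 'I_s -> 'I_p} -> T) :
  \big[op/idx]_(g : {ffun 'I_s -> 'I_p} | injectiveb g) F g =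
  \big[op/idx]_(f | incrb f) \big[op/idx]_(σ : 'S_s) F [ffun i => f (σ i)].
Proof.
rewrite pair_big_dep /=.
rewrite (reindex_onto (fun fσ : {ffun 'I_s -> 'I_p} * 'S_s => [ffun i => fσ.1 (fσ.2 i)])
                      (fun g => (sort_map g, sorting_perm g))) /=; last first.
  by move=> g /injectiveP g_inj; apply/ffunP => i; rewrite ffunE sort_map_sorting_perm.
apply: eq_bigl => -[f σ] /=; apply/idP/idP.
  by case/andP => /injectiveP g_inj /eqP[<- _]; rewrite andbT sort_map_incr.
rewrite andbT => f_incr; have f_inj := incr_inj f_incr.
have fσ_inj : injective [ffun i => f (σ i)].
  by move=> i j; rewrite !ffunE => /f_inj /perm_inj.
have sort_fσ : sort_map [ffun i => f (σ i)] = f.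
  rewrite -[RHS](sort_map_id f_incr); apply: sort_map_eq => // x.
  apply/codomP/codomP => -[i ->]; first by exists (σ i); rewrite ffunE.
  by exists (σ^-1 i)%g; rewrite ffunE permKV.
apply/andP; split; first exact/injectiveP.
rewrite sort_fσ; apply/eqP; congr pair; apply/permP => i.
by apply: f_inj; rewrite -{1}sort_fσ sort_map_sorting_perm // ffunE.
Qed.

End IncreasingMaps.

Section CauchyBinet.
Variables (K : comNzRingType) (s p : nat).

(* Multilinearity of the determinant in the rows of X *m Y. *)
Lemma det_mulmx_expand (X : 'M[K]_(s, p)) (Y : 'M[K]_(p, s)) :
  \det (X *m Y) = \sum_(g : {ffun 'I_s -> 'I_p}) (\prod_i X i (g i)) * \det (rowsub g Y).
Proof.
transitivity (\sum_(σ : 'S_s) \sum_(g : {ffun 'I_s -> 'I_p})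
    (-1) ^+ σ * ((\prod_i X i (g i)) * \prod_i Y (g i) (σ i))).
  apply: eq_bigr => σ _; rewrite -big_distrr /=; congr (_ * _).
  under [RHS]eq_bigr do rewrite -big_split /=.
  rewrite -(bigA_distr_bigA (fun i k => X i k * Y k (σ i))) /=.
  by apply: eq_bigr => i _; rewrite mxE.
rewrite exchange_big /=; apply: eq_bigr => g _; rewrite big_distrr /=.
apply: eq_bigr => σ _; rewrite mulrCA; congr (_ * (_ * _)).
by apply: eq_bigr => i _; rewrite mxE.
Qed.

(* Cauchy-Binet: only injective g contribute, and they are grouped by their
   image, i.e. by an increasing map composed with a permutation. *)
Theorem cauchy_binet (X : 'M[K]_(s, p)) (Y : 'M[K]_(p, s)) :
  \det (X *m Y) =
  \sum_(f : {ffun 'I_s -> 'I_p} | incrb f) \det (colsub f X) * \det (rowsub f Y).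
Proof.
rewrite det_mulmx_expand (bigID (fun g : {ffun 'I_s -> 'I_p} => injectiveb g)) /=.
rewrite [X in _ + X]big1 ?addr0; last first.
  move=> g /injectivePn [i1 [i2 neq_i12 eq_g]].
  by rewrite (determinant_alternate neq_i12) ?mulr0 // => j; rewrite !mxE eq_g.
rewrite big_injective_maps; apply: eq_bigr => f _.
rewrite /(\det (colsub f X)) big_distrl /=; apply: eq_bigr => σ _.
have -> : rowsub [ffun i => f (σ i)] Y = row_perm σ (rowsub f Y).
  by apply/matrixP => i j; rewrite !mxE ffunE.
have -> : \prod_i X i ([ffun i => f (σ i)] i) = \prod_i colsub f X i (σ i).
  by apply: eq_bigr => i _; rewrite !mxE ffunE.
by rewrite row_permE det_mulmx det_perm mulrCA mulrA.
Qed.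

End CauchyBinet.

Lemma colsub_mul_diagw (a q b : nat) (P : 'M[R]_(a, q)) (d : 'cV[R]_q) (h : 'I_b -> 'I_q) :
  colsub h (P *m diagw d) = colsub h P *m diagw (rowsub h d).
Proof. by apply/matrixP => i j; rewrite /diagw !mul_mx_diag !mxE. Qed.

Lemma det_mul_diagw (b : nat) (P : 'M[R]_b) (d : 'cV[R]_b) :
  \det (P *m diagw d) = \det P * \prod_i d i 0.
Proof.
by rewrite det_mulmx /diagw det_diag; congr (_ * _); apply: eq_bigr => i _; rewrite !mxE.
Qed.

Section JacobianDeterminant.
Variables (r n s : nat) (A' : 'M[R]_(s, r)) (B : 'M[R]_(r, n)) (C : 'M[R]_(n, s)).

(* det(A'_kappa B_lambda C). Up to positive diagonal factors, A'_kappa B_lambda C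
   is the derivative of f_kappa along S, seen through C and A'. *)
Definition jac_det (kappa : 'cV[R]_r) (lambda : 'cV[R]_n) :=
  \det ((A' *m diagw kappa) *m (B *m diagw lambda) *m C).

(* The coefficient det(Ã_{I,J}) det(B_{J,I}) of kappa^J lambda^I in jac_det. *)
Definition minor_prod (f : 'I_s -> 'I_n) (g : 'I_s -> 'I_r) :=
  \det (mxsub f g (C *m A')) * \det (mxsub g f B).

Lemma minor_prod_ext (f f' : 'I_s -> 'I_n) (g g' : 'I_s -> 'I_r) :
  f =1 f' -> g =1 g' -> minor_prod f g = minor_prod f' g'.
Proof.
by move=> ef eg; rewrite /minor_prod; congr (_ * _); congr determinant;
  apply/matrixP => i j; rewrite !mxE ?ef ?eg.
Qed.

(* Index set of the coefficients: pairs (J, I) of s-subsets of [r] and [n]. *)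
Definition minor_index := ({ffun 'I_s -> 'I_r} * {ffun 'I_s -> 'I_n})%type.

Definition incr_index (gf : minor_index) : bool := incrb gf.1 && incrb gf.2.

Lemma minor_prod_to_index (P : R -> Prop) :
  (forall f g, incr f -> incr g -> P (minor_prod f g)) ->
  forall gf : minor_index, incr_index gf -> P (minor_prod gf.2 gf.1).
Proof. by move=> P_incr [g f] /andP[/incrbP g_incr /incrbP f_incr]; apply: P_incr. Qed.

Lemma minor_prod_of_index (P : R -> Prop) :
  (forall gf : minor_index, incr_index gf -> P (minor_prod gf.2 gf.1)) ->
  forall f g, incr f -> incr g -> P (minor_prod f g).
Proof.
move=> P_index f g f_incr g_incr.
have := P_index ([ffun i => g i], [ffun i => f i]).
rewrite /incr_index /= !incr_ffun // => /(_ isT).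
by rewrite (@minor_prod_ext _ f _ g) // => i; rewrite ffunE.
Qed.

(* Two applications of Cauchy-Binet expand jac_det as a multilinear polynomial. *)
Lemma jac_det_expand kappa lambda : jac_det kappa lambda =
  \sum_(gf : minor_index | incr_index gf)
     minor_prod gf.2 gf.1 * (\prod_i kappa (gf.1 i) 0) * (\prod_i lambda (gf.2 i) 0).
Proof.
rewrite -(pair_big (@incrb s r) (@incrb s n) (fun g f =>
  minor_prod f g * (\prod_i kappa (g i) 0) * (\prod_i lambda (f i) 0))) /=.
rewrite /jac_det -mulmxA cauchy_binet; apply: eq_bigr => g _.
rewrite colsub_mul_diagw det_mul_diagw -mul_rowsub_mx cauchy_binet big_distrr /=.
apply: eq_bigr => f _.
rewrite -mul_rowsub_mx colsub_mul_diagw det_mul_diagw /minor_prod !mxsub_mul det_mulmx.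
have -> : colsub f (rowsub g B) = mxsub g f B by apply/matrixP => i j; rewrite !mxE.
have -> : \prod_i rowsub g kappa i 0 = \prod_i kappa (g i) 0.
  by apply: eq_bigr => i _; rewrite mxE.
have -> : \prod_i rowsub f lambda i 0 = \prod_i lambda (f i) 0.
  by apply: eq_bigr => i _; rewrite mxE.
set a := \det (colsub g A'); set c := \det (rowsub f C); set b := \det (mxsub g f B).
set K := \prod_(i < s) _; set L := \prod_(i < s) _.
ring.
Qed.

End JacobianDeterminant.

Lemma mx_eq0_on_vectors (a b : nat) (N : 'M[R]_(a, b)) :
  (forall v : 'cV[R]_b, N *m v = 0) -> N = 0.
Proof.
move=> Nv0; apply/matrixP => i j.
have := congr1 (fun M : 'M[R]_(a, 1) => M i ord0) (Nv0 (delta_mx j ord0)).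
by rewrite -colE !mxE.
Qed.

(* With Z D = 1 and Z C = 0: [Z; M] [D C] = [1 0; M D, M C]. *)
Lemma det_col_mx_mul_row_mx (p s n : nat) (e : (p + s)%N = n) (Z : 'M[R]_(p, n))
    (M : 'M[R]_(s, n)) (D : 'M[R]_(n, p)) (C : 'M[R]_(n, s)) :
  Z *m D = 1%:M -> Z *m C = 0 ->
  \det (castmx (e, erefl n) (col_mx Z M)) * \det (castmx (erefl n, e) (row_mx D C))
  = \det (M *m C).
Proof.
move=> ZD ZC; case: n / e Z M D C ZD ZC => Z M D C ZD ZC.
by rewrite !castmx_id -det_mulmx mul_col_row ZD ZC det_lblock det1 mul1r.
Qed.

Lemma det_row_mx_neq0 (p s n : nat) (e : (p + s)%N = n) (Z : 'M[R]_(p, n))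
    (D : 'M[R]_(n, p)) (C : 'M[R]_(n, s)) :
  Z *m D = 1%:M -> Z *m C = 0 -> (forall u : 'cV[R]_s, C *m u = 0 -> u = 0) ->
  \det (castmx (erefl n, e) (row_mx D C)) != 0.
Proof.
move=> ZD ZC C_inj; case: n / e Z D C ZD ZC C_inj => Z D C ZD ZC C_inj.
rewrite castmx_id -det_tr; apply/negP => /det0P [v vn0].
move/(congr1 trmx); rewrite trmx_mul trmxK trmx0 -[v^T]vsubmxK mul_row_col => vDC0.
have vu0 : usubmx v^T = 0.
  have := congr1 (mulmx Z) vDC0.
  by rewrite mulmxDr !mulmxA ZD ZC mul0mx addr0 mul1mx mulmx0.
move: vDC0; rewrite vu0 mulmx0 add0r => /C_inj vd0.
by move: vn0; rewrite -[v]trmxK -[v^T]vsubmxK vu0 vd0 col_mx0 trmx0 eqxx.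
Qed.

Section BlockDeterminant.
Variables (n s : nat) (Z : 'M[R]_(n - s, n)) (C : 'M[R]_(n, s)) (hsn : (s <= n)%N).
Hypotheses (im_C_ker_Z : forall x, im_mx C x <-> ker_mx Z x) (rank_C : \rank C = s).

Lemma C_inj (u : 'cV[R]_s) : C *m u = 0 -> u = 0.
Proof.
move=> Cu0; have Ct_free : row_free C^T by rewrite /row_free mxrank_tr rank_C.
have := mulmx_free_eq0 u^T Ct_free; rewrite -trmx_mul Cu0 trmx0 eqxx => /esym/eqP.
by move/(congr1 trmx); rewrite trmxK trmx0.
Qed.

Lemma Z_mul_C : Z *m C = 0.
Proof.
by apply: mx_eq0_on_vectors => v; rewrite -mulmxA; apply/im_C_ker_Z; exists v.
Qed.

(* ker Z has dimension s, so the n - s rows of Z are independent. *)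
Lemma Z_row_free : row_free Z.
Proof.
have ker_sub_C : (kermx Z^T <= C^T)%MS.
  apply/row_subP => i; set u := row i (kermx Z^T).
  have : u *m Z^T = 0 by apply/sub_kermxP; rewrite row_sub.
  move/(congr1 trmx); rewrite trmx_mul trmxK trmx0 => Zu0.
  have [v uv] : im_mx C u^T by apply/im_C_ker_Z.
  by apply/submxP; exists v^T; rewrite -trmx_mul -uv trmxK.
have C_sub_ker : (C^T <= kermx Z^T)%MS.
  by apply/sub_kermxP; rewrite -trmx_mul Z_mul_C trmx0.
have := mxrankS ker_sub_C; have := mxrankS C_sub_ker.
rewrite mxrank_tr rank_C mxrank_ker mxrank_tr /row_free => le1 le2.
by apply/eqP; have := rank_leq_col Z; lia.
Qed.

Lemma det_col_mx_Z : exists2 c0 : R, c0 != 0 &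
  forall M : 'M[R]_(s, n),
    \det (castmx (subnK hsn, erefl n) (col_mx Z M)) = c0 * \det (M *m C).
Proof.
have [D ZD] := row_freeP Z_row_free.
have W_neq0 := det_row_mx_neq0 (subnK hsn) ZD Z_mul_C C_inj.
exists (\det (castmx (erefl n, subnK hsn) (row_mx D C)))^-1; first by rewrite invr_eq0.
move=> M; apply: (mulIf W_neq0).
by rewrite mulrAC mulVf // mul1r det_col_mx_mul_row_mx // Z_mul_C.
Qed.

End BlockDeterminant.

Lemma exp_gt0 (t : R) : 0 < exp t.
Proof. exact/RltP/exp_pos. Qed.

Lemma exp_gt1 (t : R) : 0 < t -> 1 < exp t.
Proof. by move/RltP/exp_increasing; rewrite exp_0 => /RltP. Qed.

Lemma exp_lt1 (t : R) : t < 0 -> exp t < 1.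
Proof. by move/RltP/exp_increasing; rewrite exp_0 => /RltP. Qed.

Lemma exp_sum (I : finType) (F : I -> R) : exp (\sum_i F i) = \prod_i exp (F i).
Proof. exact: (big_morph exp exp_plus exp_0). Qed.

Definition expm1_quot (t : R) := if t == 0 then 1 else (exp t - 1) / t.

Lemma expm1_quotE t : expm1_quot t * t = exp t - 1.
Proof.
rewrite /expm1_quot; case: eqVneq => [->|t_neq0]; first by rewrite exp_0 mulr0 subrr.
by rewrite mulrVK ?unitfE.
Qed.

Lemma expm1_quot_gt0 t : 0 < expm1_quot t.
Proof.
have := expm1_quotE t; have [t_lt0|t_gt0|->] := ltgtP t 0.
- by have := exp_lt1 t_lt0; nra.
- by have := exp_gt1 t_gt0; nra.
- by rewrite /expm1_quot eqxx ltr01.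
Qed.

Definition lnv (n : nat) (x : 'cV[R]_n) : 'cV[R]_n := \col_i ln (x i 0).

Lemma monB_exp (r n : nat) (B : 'M[R]_(r, n)) (x : 'cV[R]_n) :
  monB B x = \col_j exp ((B *m lnv x) j 0).
Proof.
apply/matrixP => j k; rewrite !mxE exp_sum.
by apply: eq_bigr => i _; rewrite mxE.
Qed.

Lemma diagw_mulmx (k q : nat) (a : 'cV[R]_k) (N : 'M[R]_(k, q)) i j :
  (diagw a *m N) i j = a i 0 * N i j.
Proof. by rewrite /diagw mul_diag_mx !mxE. Qed.

Lemma diagwM (k : nat) (a b : 'cV[R]_k) :
  diagw a *m diagw b = diagw (\col_i (a i 0 * b i 0)).
Proof. by rewrite /diagw mulmx_diag; congr diag_mx; apply/matrixP => i j; rewrite !mxE. Qed.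

Lemma monB_sub (r n : nat) (B : 'M[R]_(r, n)) (x y a : 'cV[R]_n) :
  lnv x = lnv y + a ->
  exists2 mu : 'cV[R]_r, posv mu & monB B x - monB B y = diagw mu *m (B *m a).
Proof.
move=> ln_xy.
exists (\col_j (exp ((B *m lnv y) j 0) * expm1_quot ((B *m a) j 0))).
  by move=> j; apply/RltP; rewrite mxE mulr_gt0 ?exp_gt0 ?expm1_quot_gt0.
apply/matrixP => j k; rewrite (ord1 k) !monB_exp ln_xy mulmxDr.
rewrite diagw_mulmx !mxE exp_plus -mulrA expm1_quotE.
by rewrite mulrBr mulr1.
Qed.

Lemma div_gt0_same_sign (a b : R) : 0 < a * b -> 0 < a / b.
Proof.
move=> ab_gt0; have b_neq0 : b != 0 by apply: contraTneq ab_gt0 => ->; rewrite mulr0 ltxx.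
have -> : a / b = (a * b) / (b ^+ 2) by rewrite expr2 invfM mulrA mulfK.
by rewrite divr_gt0 // lt_def sqr_ge0 expf_neq0.
Qed.

(* ln is strictly increasing. *)
Lemma ln_sub_mul_gt0 (u w : R) : 0 < u -> 0 < w -> u != w -> 0 < (ln u - ln w) * (u - w).
Proof.
move=> /RltP u_gt0 /RltP w_gt0; have [uw|wu|->] := ltgtP u w => [_|_|]; last by case/negP.
- by have /RltP := ln_increasing _ _ u_gt0 (RltP _ _ uw); nra.
- by have /RltP := ln_increasing _ _ w_gt0 (RltP _ _ wu); nra.
Qed.

Section Secants.
Variables (r n : nat) (B : 'M[R]_(r, n)).

Lemma monB_secant (x y : 'cV[R]_n) : posv x -> posv y ->
  exists2 lambda : 'cV[R]_n, posv lambda & exists2 mu : 'cV[R]_r, posv mu &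
    monB B x - monB B y = diagw mu *m (B *m (diagw lambda *m (x - y))).
Proof.
move=> x_pos y_pos.
pose lambda : 'cV[R]_n :=
  \col_i (if x i 0 == y i 0 then 1 else (ln (x i 0) - ln (y i 0)) / (x i 0 - y i 0)).
exists lambda.
  move=> i; apply/RltP; rewrite mxE; case: eqVneq => [_|xy_neq]; first exact: ltr01.
  by apply/div_gt0_same_sign/ln_sub_mul_gt0 => //; apply/RltP.
apply: monB_sub; apply/matrixP => i k; rewrite (ord1 k) [in RHS]mxE diagw_mulmx !mxE.
case: eqVneq => [->|xy_neq]; first by rewrite mul1r subrr addr0.
by rewrite divfK ?subr_eq0 // addrC subrK.
Qed.

Lemma monB_secant_realize (v lambda : 'cV[R]_n) : posv lambda ->
  exists x y : 'cV[R]_n, [/\ posv x, posv y, x - y = v &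
    exists2 mu : 'cV[R]_r, posv mu &
      monB B x - monB B y = diagw mu *m (B *m (diagw lambda *m v))].
Proof.
move=> lambda_pos; set a := diagw lambda *m v.
have aE i : a i 0 = lambda i 0 * v i 0 by rewrite diagw_mulmx.
clearbody a.
pose y : 'cV[R]_n := \col_i (if v i 0 == 0 then 1 else v i 0 / (exp (a i 0) - 1)).
pose x : 'cV[R]_n := \col_i (y i 0 * exp (a i 0)).
have y_pos : posv y.
  move=> i; apply/RltP; rewrite mxE; case: eqVneq => [_|v_neq0]; first exact: ltr01.
  apply: div_gt0_same_sign; have /RltP lambda_gt0 := lambda_pos i; rewrite aE.
  have [v_lt0|v_gt0|v0] := ltgtP (v i 0) 0; last by rewrite v0 eqxx in v_neq0.
  + have : lambda i 0 * v i 0 < 0 by rewrite pmulr_rlt0.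
    by move/exp_lt1; nra.
  + by have := exp_gt1 (mulr_gt0 lambda_gt0 v_gt0); nra.
exists x, y; split => //.
- by move=> i; apply/RltP; rewrite mxE mulr_gt0 ?exp_gt0 //; apply/RltP.
- apply/matrixP => i k; rewrite (ord1 k) !mxE.
  case: eqVneq => [v0|v_neq0]; first by rewrite aE v0 mulr0 exp_0 mulr1 subrr.
  have a_neq0 : a i 0 != 0.
    by rewrite aE mulf_neq0 // gt_eqF //; apply/RltP.
  have e_neq0 : exp (a i 0) - 1 != 0.
    apply: contra a_neq0; rewrite subr_eq0 => /eqP e1.
    by apply/eqP/exp_inv; rewrite exp_0.
  by rewrite -{2}(mulr1 (_ / _)) -mulrBr divfK.
apply: monB_sub; apply/matrixP => i k; rewrite (ord1 k) !mxE.
rewrite ln_mult ?ln_exp //; last exact: exp_pos.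
by have := y_pos i; rewrite mxE.
Qed.

End Secants.

Lemma det_eq0_ker (k : nat) (N : 'M[R]_k) :
  \det N = 0 -> exists2 u : 'cV[R]_k, u != 0 & N *m u = 0.
Proof.
rewrite -det_tr => /eqP /det0P [v v_neq0 vN0]; exists v^T.
  by apply: contra v_neq0 => /eqP/(congr1 trmx); rewrite trmxK trmx0 => ->.
by rewrite -[N]trmxK -trmx_mul vN0 trmx0.
Qed.

Lemma ker_det_eq0 (k : nat) (N : 'M[R]_k) (u : 'cV[R]_k) :
  u != 0 -> N *m u = 0 -> \det N = 0.
Proof.
move=> u_neq0 Nu0; apply/eqP; apply: contraR u_neq0 => det_neq0.
have N_unit : N \in unitmx by rewrite unitmxE unitfE.
by rewrite -(mulKmx N_unit u) Nu0 mulmx0.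
Qed.

Section Injectivity.
Variables (m r n s : nat) (A : 'M[R]_(m, r)) (B : 'M[R]_(r, n))
  (S : 'cV[R]_n -> Prop) (C : 'M[R]_(n, s)) (A' : 'M[R]_(s, r)).
Hypotheses (S_im_C : forall x, S x <-> im_mx C x) (rank_C : \rank C = s)
  (ker_A' : forall v : 'cV[R]_r, A *m v = 0 <-> A' *m v = 0).

Definition jac_nonvanishing := forall (kappa : 'cV[R]_r) (lambda : 'cV[R]_n),
  posv kappa -> posv lambda -> jac_det A' B C kappa lambda != 0.

Lemma fk_sub (kappa : 'cV[R]_r) x y :
  fk A B kappa x - fk A B kappa y = A *m (diagw kappa *m (monB B x - monB B y)).
Proof. by rewrite /fk -mulmxBr mulmxA. Qed.

(* A kernel vector u of A'_kappa B_lambda C yields, through a secant of x^B,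
   two distinct points of a coset of S with the same image under some f_kappa'. *)
Lemma injective_jac_nonvanishing :
  (forall kappa, posv kappa -> inj_wrt (fk A B kappa) S) -> jac_nonvanishing.
Proof.
move=> f_inj kappa lambda kappa_pos lambda_pos; apply/eqP => /det_eq0_ker [u u_neq0].
rewrite -!mulmxA => Mu0; set v := C *m u in Mu0.
have v_neq0 : v != 0 by apply: contra u_neq0 => /eqP /(C_inj rank_C) ->.
have [x [y [x_pos y_pos xy_v [mu mu_pos secant]]]] := monB_secant_realize B v lambda_pos.
pose kappa' : 'cV[R]_r := \col_j (kappa j 0 / mu j 0).
have kappa'_pos : posv kappa'.
  by move=> j; apply/RltP; rewrite mxE divr_gt0 //; apply/RltP.
have kappa'_mu : diagw kappa' *m diagw mu = diagw kappa.
  rewrite diagwM; congr diagw; apply/matrixP => j k; rewrite (ord1 k) !mxE divfK //.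
  by rewrite gt_eqF //; apply/RltP.
apply: (f_inj kappa' kappa'_pos x y x_pos y_pos).
- by move=> eq_xy; move: v_neq0; rewrite -xy_v eq_xy subrr eqxx.
- by rewrite xy_v; apply/S_im_C; exists u.
apply/eqP; rewrite -subr_eq0 fk_sub secant (mulmxA (diagw kappa')) kappa'_mu.
by apply/eqP/ker_A'; move: Mu0; rewrite /v !mulmxA.
Qed.

(* Conversely, a collision f_kappa(x) = f_kappa(y) with x - y = C u in S yields
   the kernel vector u of A'_kappa' B_lambda C for a suitable positive kappa', lambda. *)
Lemma jac_nonvanishing_injective :
  jac_nonvanishing -> forall kappa, posv kappa -> inj_wrt (fk A B kappa) S.
Proof.
move=> jac_nz kappa kappa_pos x y x_pos y_pos neq_xy S_xy eq_f.
have [u xy_Cu] : im_mx C (x - y) by apply/S_im_C.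
have u_neq0 : u != 0.
  by apply: contra_not_neq neq_xy => u0; apply/eqP; rewrite -subr_eq0 xy_Cu u0 mulmx0.
have [lambda lambda_pos [mu mu_pos secant]] := monB_secant B x_pos y_pos.
pose kappa' : 'cV[R]_r := \col_j (kappa j 0 * mu j 0).
have kappa'_pos : posv kappa'.
  by move=> j; apply/RltP; rewrite mxE mulr_gt0 //; apply/RltP.
have /ker_A' : A *m (diagw kappa' *m (B *m (diagw lambda *m (x - y)))) = 0.
  by rewrite -diagwM -mulmxA -secant -fk_sub eq_f subrr.
rewrite xy_Cu !mulmxA => ker_u.
move: (jac_nz kappa' lambda kappa'_pos lambda_pos).
by rewrite /jac_det (ker_det_eq0 u_neq0) ?eqxx // !mulmxA.
Qed.
End Injectivity.

Lemma sum_same_sign_neq0 (I : finType) (P : pred I) (F : I -> R) (i0 : I) :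
  P i0 -> F i0 != 0 ->
  (forall i, P i -> 0 <= F i) \/ (forall i, P i -> F i <= 0) ->
  \sum_(i | P i) F i != 0.
Proof.
move=> P_i0 F_i0 [F_ge0|F_le0]; apply: contra F_i0 => /eqP sum0.
  by rewrite (psumr_eq0P F_ge0 sum0).
have sumN0 : \sum_(i | P i) - F i = 0 by rewrite sumrN sum0 oppr0.
by rewrite -oppr_eq0 (psumr_eq0P _ sumN0) // => i /F_le0; rewrite oppr_ge0.
Qed.

Lemma Rle_sign_scale (I : Type) (c : I -> R) (c0 : R) :
  (forall e, Rle 0 (c e)) \/ (forall e, Rle (c e) 0) ->
  (forall e, Rle 0 (c0 * c e)) \/ (forall e, Rle (c0 * c e) 0).
Proof.
have [c0_le0|c0_ge0] := lerP c0 0; case=> c_sign; [right|left|left|right] => e;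
  have /RleP c_e := c_sign e; apply/RleP.
- by rewrite mulr_le0_ge0.
- by rewrite mulr_le0.
- by rewrite mulr_ge0 // ltW.
- by rewrite mulr_ge0_le0 // ltW.
Qed.

(* The exponent vector of the squarefree monomial prod_(j in image g) x_j. *)
Definition ind (s k : nat) (g : {ffun 'I_s -> 'I_k}) : {ffun 'I_k -> 'I_2} :=
  [ffun j => if j \in codom g then ord_max else ord0].

Lemma prod_ind (s k : nat) (g : {ffun 'I_s -> 'I_k}) (F : 'I_k -> R) :
  injective g -> \prod_j F j ^+ ind g j = \prod_i F (g i).
Proof.
move=> g_inj; rewrite -(big_imset _ (in2W g_inj)) /= [RHS]big_mkcond /=.
apply: eq_bigr => j _; rewrite ffunE.
have -> : (j \in [set g i | i in xpredT]) = (j \in codom g).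
  by apply/imsetP/codomP => -[i]; [move=> _ ->|move=> ->]; exists i.
by case: (j \in codom g); rewrite ?expr1 ?expr0.
Qed.

Section SignConditions.
Variables (r n s : nat) (B : 'M[R]_(r, n)) (Z : 'M[R]_(n - s, n)) (C : 'M[R]_(n, s))
  (A' : 'M[R]_(s, r)) (hsn : (s <= n)%N).
Hypotheses (im_C_ker_Z : forall x, im_mx C x <-> ker_mx Z x) (rank_C : \rank C = s).

Definition det_sign_condition := exists (d : nat) (c : expv r n d -> R),
  (forall (kappa : 'cV[R]_r) (lambda : 'cV[R]_n),
     \det (Gamma hsn Z A' B kappa lambda) = peval c kappa lambda)
  /\ (exists e, c e <> 0)
  /\ ((forall e, Rle 0 (c e)) \/ (forall e, Rle (c e) 0)).

Definition minor_sign_condition :=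
  (exists (f : 'I_s -> 'I_n) (g : 'I_s -> 'I_r),
     incr f /\ incr g /\ minor_prod A' B C f g <> 0)
  /\ ((forall f g, incr f -> incr g -> Rle 0 (minor_prod A' B C f g))
      \/ (forall f g, incr f -> incr g -> Rle (minor_prod A' B C f g) 0)).

Lemma det_Gamma_jac : exists2 c0 : R, c0 != 0 &
  forall kappa lambda, \det (Gamma hsn Z A' B kappa lambda) = c0 * jac_det A' B C kappa lambda.
Proof.
have [c0 c0_neq0 det_c0] := det_col_mx_Z hsn im_C_ker_Z rank_C.
by exists c0 => // kappa lambda; rewrite /Gamma det_c0.
Qed.

Lemma det_sign_jac_nonvanishing : det_sign_condition -> jac_nonvanishing B C A'.
Proof.
move=> [d [c [det_c [[e0 ce0] c_sign]]]] kappa lambda kappa_pos lambda_pos.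
have [c0 _ det_c0] := det_Gamma_jac.
have mon_gt0 (e : expv r n d) :
    0 < (\prod_(k < r) kappa k 0 ^+ e.1 k) * (\prod_(j < n) lambda j 0 ^+ e.2 j).
  by rewrite mulr_gt0 // prodr_gt0 // => i _; rewrite exprn_gt0 //; apply/RltP.
apply: contra_neq (_ : peval c kappa lambda != 0) => [jac0|].
  by rewrite -det_c det_c0 jac0 mulr0.
rewrite /peval; under eq_bigr do rewrite -mulrA.
apply: (@sum_same_sign_neq0 _ xpredT _ e0) => //.
  by rewrite mulf_eq0 negb_or (gt_eqF (mon_gt0 e0)) andbT; apply/eqP.
case: c_sign => c_sign; [left|right] => e _; have /RleP c_e := c_sign e.
  by rewrite mulr_ge0 // ltW.
by rewrite mulr_le0_ge0 // ltW.
Qed.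

Definition jac_coef (e : expv r n 1) :=
  \sum_(gf : minor_index r n s | incr_index gf)
    (if (ind gf.1, ind gf.2) == e then minor_prod A' B C gf.2 gf.1 else 0).

Lemma jac_det_peval kappa lambda : jac_det A' B C kappa lambda = peval jac_coef kappa lambda.
Proof.
rewrite jac_det_expand /peval.
under [RHS]eq_bigr => e _ do rewrite /jac_coef !big_distrl /=.
rewrite [RHS]exchange_big /=; apply: eq_bigr => -[g f] /andP[g_incr f_incr] /=.
rewrite (bigD1 (ind g, ind f)) //= eqxx [X in _ + X]big1 ?addr0; last first.
  by move=> e ne; rewrite eq_sym (negbTE ne) !mul0r.
by rewrite !prod_ind //; apply: incr_inj.
Qed.

(* (min) implies (det): the coefficients of det Gamma are c0 times sums of
   products of minors with one sign, and the coefficient of kappa^J0 lambda^I0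
   contains the nonzero product for (I0, J0). *)
Lemma minor_sign_det_sign : minor_sign_condition -> det_sign_condition.
Proof.
case=> -[f0 [g0 [f0_incr [g0_incr p0_neq0]]]] p_sign.
have {}p_sign :
    (forall gf : minor_index r n s, incr_index gf -> 0 <= minor_prod A' B C gf.2 gf.1)
    \/ (forall gf : minor_index r n s, incr_index gf -> minor_prod A' B C gf.2 gf.1 <= 0).
  case: p_sign => [/(minor_prod_to_index (P := Rle 0)) p_sign|
                  /(minor_prod_to_index (P := fun x => Rle x 0)) p_sign];
    [left|right] => gf /p_sign/RleP //.
have [c0 c0_neq0 det_c0] := det_Gamma_jac.
have terms_sign (e : expv r n 1) :
    (forall gf : minor_index r n s, incr_index gf ->
       0 <= (if (ind gf.1, ind gf.2) == e then minor_prod A' B C gf.2 gf.1 else 0))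
    \/ (forall gf : minor_index r n s, incr_index gf ->
       (if (ind gf.1, ind gf.2) == e then minor_prod A' B C gf.2 gf.1 else 0) <= 0).
  by case: p_sign => p_sign; [left|right] => gf /p_sign; case: eqP.
exists 1%N, (fun e => c0 * jac_coef e); split; [|split].
- move=> kappa lambda; rewrite det_c0 jac_det_peval /peval big_distrr /=.
  by apply: eq_bigr => e _; rewrite !mulrA.
- pose gf0 : minor_index r n s := ([ffun i => g0 i], [ffun i => f0 i]).
  exists (ind gf0.1, ind gf0.2); apply/eqP; rewrite mulf_neq0 //.
  apply: (sum_same_sign_neq0 (i0 := gf0)); last exact: terms_sign.
    by rewrite /incr_index /= !incr_ffun.
  rewrite eqxx (@minor_prod_ext _ _ _ A' B C _ f0 _ g0) => [|i|i]; rewrite ?ffunE //.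
  exact/eqP.
- apply: Rle_sign_scale; case: p_sign => p_sign; [left|right] => e; apply/RleP.
  + by apply: sumr_ge0 => gf /p_sign; case: eqP.
  + by apply: sumr_le0 => gf /p_sign; case: eqP.
Qed.

End SignConditions.

Lemma continuity_ext (f g : R -> R) : f =1 g -> continuity f -> continuity g.
Proof.
move=> fg f_cont x eps eps_gt0; have [d [d_gt0 close]] := f_cont x eps eps_gt0.
by exists d; split=> // y; rewrite -!fg; apply: close.
Qed.

Lemma continuity_cst (c : R) : continuity (fun=> c).
Proof. exact: continuity_const. Qed.

Lemma continuity_affine (a c : R) : continuity (fun t => a + t * c).
Proof.
by apply: continuity_ext (continuity_plus _ _ (continuity_cst a)
  (continuity_mult _ _ (derivable_continuous _ derivable_id) (continuity_cst c))).
Qed.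

Lemma continuity_sum (I : finType) (P : pred I) (F : I -> R -> R) :
  (forall i, continuity (F i)) -> continuity (fun t => \sum_(i | P i) F i t).
Proof.
move=> F_cont; elim: (index_enum I) => [|i l IHl].
  by apply: continuity_ext (continuity_cst 0) => t; rewrite big_nil.
case: (boolP (P i)) => Pi.
  by apply: continuity_ext (continuity_plus _ _ (F_cont i) IHl) => t; rewrite big_cons Pi.
by apply: continuity_ext IHl => t; rewrite big_cons (negbTE Pi).
Qed.

Lemma continuity_prod (I : finType) (F : I -> R -> R) :
  (forall i, continuity (F i)) -> continuity (fun t => \prod_i F i t).
Proof.
move=> F_cont; elim: (index_enum I) => [|i l IHl].
  by apply: continuity_ext (continuity_cst 1) => t; rewrite big_nil.
by apply: continuity_ext (continuity_mult _ _ (F_cont i) IHl) => t; rewrite big_cons.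
Qed.

Definition segment (k : nat) (a b : 'cV[R]_k) (t : R) : 'cV[R]_k :=
  \col_j (a j 0 + t * (b j 0 - a j 0)).

Lemma segment0 (k : nat) (a b : 'cV[R]_k) : segment a b 0 = a.
Proof. by apply/matrixP => i j; rewrite (ord1 j) mxE mul0r addr0. Qed.

Lemma segment1 (k : nat) (a b : 'cV[R]_k) : segment a b 1 = b.
Proof. by apply/matrixP => i j; rewrite (ord1 j) mxE mul1r addrC subrK. Qed.

Lemma segment_pos (k : nat) (a b : 'cV[R]_k) (t : R) :
  posv a -> posv b -> 0 <= t -> t <= 1 -> posv (segment a b t).
Proof.
move=> a_pos b_pos t_ge0 t_le1 i; apply/RltP; rewrite mxE.
have /RltP a_gt0 := a_pos i; have /RltP b_gt0 := b_pos i.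
have [ab|ba] := lerP (a i 0) (b i 0).
  have : 0 <= t * (b i 0 - a i 0) by rewrite mulr_ge0 // subr_ge0.
  lra.
have : 0 <= (1 - t) * (a i 0 - b i 0) by rewrite mulr_ge0 // subr_ge0 // ltW.
lra.
Qed.

Section ConstantSign.
Variables (r n s : nat) (A' : 'M[R]_(s, r)) (B : 'M[R]_(r, n)) (C : 'M[R]_(n, s)).

(* Along a segment jac_det is a polynomial in t, hence continuous. *)
Lemma jac_det_segment_continuous (kappa1 kappa2 : 'cV[R]_r) (lambda1 lambda2 : 'cV[R]_n) :
  continuity (fun t => jac_det A' B C (segment kappa1 kappa2 t) (segment lambda1 lambda2 t)).
Proof.
apply: continuity_ext (continuity_sum _ (fun gf =>
    continuity_mult _ _ (continuity_mult _ _ (continuity_cst _)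
      (continuity_prod (fun i => continuity_affine _ _)))
      (continuity_prod (fun i => continuity_affine _ _)))) => t.
by rewrite jac_det_expand; apply: eq_bigr => gf _; rewrite /segment; congr (_ * _ * _);
  apply: eq_bigr => i _; rewrite mxE.
Qed.

(* A polynomial that does not vanish on the (connected) positive orthant has
   constant sign there. *)
Lemma jac_constant_sign (kappa1 kappa2 : 'cV[R]_r) (lambda1 lambda2 : 'cV[R]_n) :
  jac_nonvanishing B C A' -> posv kappa1 -> posv kappa2 -> posv lambda1 -> posv lambda2 ->
  0 < jac_det A' B C kappa1 lambda1 * jac_det A' B C kappa2 lambda2.
Proof.
move=> jac_nz k1_pos k2_pos l1_pos l2_pos; rewrite ltNge; apply/negP => /RleP prod_le0.
pose phi t := jac_det A' B C (segment kappa1 kappa2 t) (segment lambda1 lambda2 t).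
have ends_le0 : Rle (phi 0 * phi 1) 0 by rewrite /phi !segment0 !segment1.
have [t [[/RleP t_ge0 /RleP t_le1] phi_t0]] :=
  IVT_cor phi 0 1 (jac_det_segment_continuous _ _ _ _) Rle_0_1 ends_le0.
by move/eqP: (jac_nz _ _ (segment_pos k1_pos k2_pos t_ge0 t_le1)
  (segment_pos l1_pos l2_pos t_ge0 t_le1)).
Qed.

End ConstantSign.

Definition near_indicator (s k : nat) (g0 : {ffun 'I_s -> 'I_k}) (e : R) : 'cV[R]_k :=
  \col_j (if j \in codom g0 then 1 else e).

Section NearIndicator.
Variables (s k : nat) (g0 : {ffun 'I_s -> 'I_k}) (e : R).
Hypotheses (e_gt0 : 0 < e) (e_le1 : e <= 1).

Lemma near_indicator_pos : posv (near_indicator g0 e).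
Proof. by move=> j; apply/RltP; rewrite mxE; case: ifP. Qed.

Lemma near_indicator_prod_ge0 (g : {ffun 'I_s -> 'I_k}) :
  0 <= \prod_i near_indicator g0 e (g i) 0.
Proof. by apply: prodr_ge0 => i _; apply/ltW/RltP/near_indicator_pos. Qed.

Lemma near_indicator_prod_le1 (g : {ffun 'I_s -> 'I_k}) (P : pred 'I_s) :
  \prod_(i | P i) near_indicator g0 e (g i) 0 <= 1.
Proof.
by apply: prodr_ile1 => i _; rewrite mxE; case: ifP => _; rewrite ?ler01 ?lexx ?e_le1 ?ltW.
Qed.

Lemma near_indicator_prod_self : \prod_i near_indicator g0 e (g0 i) 0 = 1.
Proof. by apply: big1 => i _; rewrite mxE codom_f. Qed.

(* An increasing g other than g0 leaves the image of g0, which costs a factor e. *)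
Lemma near_indicator_prod_other (g : {ffun 'I_s -> 'I_k}) :
  incrb g0 -> incrb g -> g != g0 -> \prod_i near_indicator g0 e (g i) 0 <= e.
Proof.
move=> g0_incr g_incr g_neq; have [i gi_out] : exists i, g i \notin codom g0.
  apply/existsP; apply: contraNT g_neq => /existsPn g_in; apply/eqP.
  by apply: incr_eq_image => // _ /codomP[i ->]; have := g_in i; rewrite negbK.
rewrite (bigD1 i) //= mxE (negbTE gi_out) -[leRHS]mulr1.
by apply: ler_wpM2l; [exact: ltW | exact: near_indicator_prod_le1].
Qed.

End NearIndicator.

Section MinorSign.
Variables (r n s : nat) (A' : 'M[R]_(s, r)) (B : 'M[R]_(r, n)) (C : 'M[R]_(n, s)).

Definition minor_abs_sum :=
  \sum_(gf : minor_index r n s | incr_index gf) `|minor_prod A' B C gf.2 gf.1|.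

(* At the point (1_J0 + e 1_{not J0}, 1_I0 + e 1_{not I0}) every monomial other
   than kappa^J0 lambda^I0 is at most e, so jac_det is e-close to that coefficient. *)
Lemma jac_det_near_minor (gf0 : minor_index r n s) (e : R) :
  incr_index gf0 -> 0 < e -> e <= 1 ->
  `|jac_det A' B C (near_indicator gf0.1 e) (near_indicator gf0.2 e)
    - minor_prod A' B C gf0.2 gf0.1| <= e * minor_abs_sum.
Proof.
case: gf0 => g0 f0 gf0_incr e_gt0 e_le1; have /andP[/= g0_incr f0_incr] := gf0_incr.
rewrite jac_det_expand (bigD1 _ gf0_incr) /= !near_indicator_prod_self !mulr1 addrC addrK.
rewrite /minor_abs_sum (bigD1 _ gf0_incr) /= mulrDr.
apply: le_trans (ler_norm_sum _ _ _) (ler_wpDl _ _); first by rewrite mulr_ge0 // ltW.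
rewrite mulr_sumr; apply: ler_sum => -[g f] /andP[/andP[/= g_incr f_incr] gf_neq].
rewrite -mulrA normrM mulrC ler_wpM2r //.
rewrite ger0_norm ?mulr_ge0 ?near_indicator_prod_ge0 //.
move: gf_neq; rewrite xpair_eqE negb_and => /orP[g_neq|f_neq].
  rewrite -[leRHS]mulr1; apply: ler_pM; rewrite ?near_indicator_prod_ge0 //.
    exact: near_indicator_prod_other.
  exact: near_indicator_prod_le1.
rewrite -[leRHS]mul1r; apply: ler_pM; rewrite ?near_indicator_prod_ge0 //.
  exact: near_indicator_prod_le1.
exact: near_indicator_prod_other.
Qed.

Lemma jac_det_sign_point (gf0 : minor_index r n s) :
  incr_index gf0 -> minor_prod A' B C gf0.2 gf0.1 != 0 ->
  exists kappa lambda, [/\ posv kappa, posv lambda &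
    0 < minor_prod A' B C gf0.2 gf0.1 * jac_det A' B C kappa lambda].
Proof.
move=> gf0_incr; set p0 := minor_prod _ _ _ _ _ => p0_neq0.
have p0_gt0 : 0 < `|p0| by rewrite normr_gt0.
have K_gt0 : 0 < minor_abs_sum.
  apply: lt_le_trans p0_gt0 _; rewrite /minor_abs_sum (bigD1 _ gf0_incr) /= lerDl.
  by rewrite sumr_ge0.
pose e := Num.min 1 (`|p0| / (2 * minor_abs_sum)).
have e_gt0 : 0 < e by rewrite lt_min ltr01 divr_gt0 // mulr_gt0.
have e_le1 : e <= 1 by rewrite ge_min lexx.
have eK : e * minor_abs_sum <= `|p0| / 2.
  have : e <= `|p0| / (2 * minor_abs_sum) by rewrite ge_min lexx orbT.
  by move/(ler_wpM2r (ltW K_gt0)); rewrite invfM mulrA divfK ?gt_eqF.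
exists (near_indicator gf0.1 e), (near_indicator gf0.2 e); split;
  try exact: near_indicator_pos.
have := le_trans (jac_det_near_minor gf0_incr e_gt0 e_le1) eK.
set q := jac_det _ _ _ _ _; rewrite -/p0 => close.
have [p0_lt0|p0_pos|p0_eq0] := ltgtP p0 0; last by rewrite p0_eq0 eqxx in p0_neq0.
  by move: close; rewrite (ltr0_norm p0_lt0) ler_norml => /andP[]; nra.
by move: close; rewrite (gtr0_norm p0_pos) ler_norml => /andP[]; nra.
Qed.

(* (nonvanishing) implies (min): a nonzero coefficient exists since jac_det
   does not vanish at (1, 1), and two coefficients of opposite signs would
   give points of the orthant where jac_det has opposite signs. *)
Lemma jac_nonvanishing_minor_sign : jac_nonvanishing B C A' -> minor_sign_condition B C A'.
Proof.
move=> jac_nz; split.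
  have ones_pos k : posv (const_mx 1 : 'cV[R]_k) by move=> i; rewrite mxE; exact: Rlt_0_1.
  have := jac_nz _ _ (ones_pos r) (ones_pos n); rewrite jac_det_expand => sum_neq0.
  have [[g f] /= /andP[gf_incr p_neq0]] :
      exists gf : minor_index r n s, incr_index gf && (minor_prod A' B C gf.2 gf.1 != 0).
    apply/existsP; apply: contraNT sum_neq0 => /existsPn no_minor.
    apply/eqP/big1 => gf gf_incr; move: (no_minor gf); rewrite gf_incr negbK => /eqP ->.
    by rewrite !mul0r.
  have /andP[/incrbP g_incr /incrbP f_incr] := gf_incr.
  by exists f, g; split; [|split] => //; apply/eqP.
have [gf1 /andP[gf1_incr p1_lt0]|no_neg] :=
  pickP [pred gf : minor_index r n s | incr_index gf && (minor_prod A' B C gf.2 gf.1 < 0)].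
  have [gf2 /andP[gf2_incr p2_gt0]|no_pos] :=
    pickP [pred gf : minor_index r n s | incr_index gf && (0 < minor_prod A' B C gf.2 gf.1)].
    exfalso.
    have [k1 [l1 [k1_pos l1_pos jac1]]] := jac_det_sign_point gf1_incr (ltr0_neq0 p1_lt0).
    have [k2 [l2 [k2_pos l2_pos jac2]]] := jac_det_sign_point gf2_incr (lt0r_neq0 p2_gt0).
    rewrite (nmulr_rgt0 _ p1_lt0) in jac1; rewrite (pmulr_rgt0 _ p2_gt0) in jac2.
    by have := jac_constant_sign jac_nz k1_pos k2_pos l1_pos l2_pos; nra.
  right; apply: (minor_prod_of_index (P := fun x => Rle x 0)) => gf gf_incr; apply/RleP.
  by move: (no_pos gf); rewrite /= gf_incr => /negbT; rewrite -leNgt.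
left; apply: (minor_prod_of_index (P := Rle 0)) => gf gf_incr; apply/RleP.
by move: (no_neg gf); rewrite /= gf_incr => /negbT; rewrite -leNgt.
Qed.

End MinorSign.

Theorem mainTheorem13 (m r n s : nat)
  (A : 'M[R]_(m, r)) (B : 'M[R]_(r, n))
  (S : 'cV[R]_n -> Prop) (Z : 'M[R]_(n - s, n)) (C : 'M[R]_(n, s))
  (A' : 'M[R]_(s, r)) (hsn : (s <= n)%N)
  (hrankA : \rank A = s)
  (hSC : forall x, S x <-> im_mx C x)       (* im(C) = S *)
  (hSZ : forall x, S x <-> ker_mx Z x)      (* S = ker(Z) *)
  (hdimS : \rank C = s)                     (* dim(S) = s, as S = im(C) *)
  (hkerA' : forall v : 'cV[R]_r, A *m v = 0 <-> A' *m v = 0) :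
  let At := C *m A' in
  let prodm (f : 'I_s -> 'I_n) (g : 'I_s -> 'I_r) :=
    \det (mxsub f g At) * \det (mxsub g f B) in
  let INJ := forall kappa : 'cV[R]_r, posv kappa -> inj_wrt (fk A B kappa) S in
  let DET := exists (d : nat) (c : expv r n d -> R),
      (forall (kappa : 'cV[R]_r) (lambda : 'cV[R]_n),
          \det (Gamma hsn Z A' B kappa lambda) = peval c kappa lambda)
      /\ (exists e, c e <> 0)
      /\ ((forall e, Rle 0 (c e)) \/ (forall e, Rle (c e) 0)) in
  let MIN :=
      (exists f g, incr f /\ incr g /\ prodm f g <> 0)
      /\ ((forall f g, incr f -> incr g -> Rle 0 (prodm f g))
          \/ (forall f g, incr f -> incr g -> Rle (prodm f g) 0)) in
  (INJ <-> DET) /\ (DET <-> MIN).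
Proof.
move=> At prodm INJ DET MIN.
have im_C_ker_Z x : im_mx C x <-> ker_mx Z x by rewrite -hSC hSZ.
have inj_nz : INJ <-> jac_nonvanishing B C A'.
  split; [exact: injective_jac_nonvanishing hSC hdimS hkerA'
         |exact: jac_nonvanishing_injective hSC hkerA'].
have det_nz : DET -> jac_nonvanishing B C A'.
  exact: det_sign_jac_nonvanishing im_C_ker_Z hdimS.
have nz_min : jac_nonvanishing B C A' -> MIN := @jac_nonvanishing_minor_sign _ _ _ A' B C.
have min_det : MIN -> DET := minor_sign_det_sign hsn im_C_ker_Z hdimS.
split; split.
- by move/inj_nz/nz_min/min_det.
- by move/det_nz/inj_nz.
- by move/det_nz/nz_min.
- exact: min_det.
Qed.
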